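(* Let $\alpha_a$ be a labeled dGL hybrid game, $S$ an inductive Angelic subvalue map for $\alpha_a$, and $\varphi$ a formula compatible with $S$ (i.e. $\models S(\mathsf{end})\rightarrow\varphi$). Then every state satisfying $S(a)$ satisfies $\langle\mathcal{P}(\alpha_a,S)\rangle\varphi$.
   Context: Differential game logic (dGL). Hybrid games are generated by $\alpha,\beta ::= x:=e \mid \alpha;\beta \mid ?Q \mid \{x'=f(x)\,\&\,Q\} \mid \alpha^{*} \mid \alpha\cup\beta \mid x:=* \mid\ !Q \mid \{x'=f(x)\,\&\,Q\}^{d} \mid \alpha^{\times} \mid \alpha\cap\beta \mid x:=\otimes$, with $x$ a real variable (vector for ODEs), $e,f(x)$ polynomial terms, $Q$ a formula. Players Angel and Demon: $x:=e$ deterministic assignment; in $x:=*$ Angel (in $x:=\otimes$ Demon) assigns any real; in $\{x'=f(x)\&Q\}$ Angel (in $\{\cdot\}^d$ Demon) chooses a duration $r\ge 0$ of following the ODE with $Q$ true throughout; $?Q$ makes Angel lose and $!Q$ makes Demon lose if $Q$ is false; in $\alpha\cup\beta$ Angel (in $\alpha\cap\beta$ Demon) chooses the branch; in $\alpha^*$ Angel (in $\alpha^\times$ Demon) decides before each iteration whether to repeat or stop; $\alpha;\beta$ sequential. Formulas: polynomial (in)equalities closed under connectives, real quantifiers, and modalities $\langle\alpha\rangle\varphi$ (Angel can win $\alpha$ reaching $\varphi$) and $[\alpha]\varphi\equiv\neg\langle\alpha\rangle\neg\varphi$, with the standard dGL winning-region semantics ($\langle x:=*\rangle\varphi\leftrightarrow\exists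 x\varphi$, $\langle x:=\otimes\rangle\varphi\leftrightarrow\forall x\varphi$, $\langle ?Q\rangle\varphi\leftrightarrow Q\wedge\varphi$, $\langle !Q\rangle\varphi\leftrightarrow(Q\rightarrow\varphi)$, $\cup$ as disjunction, $\cap$ as conjunction, $\langle\alpha;\beta\rangle\varphi\leftrightarrow\langle\alpha\rangle\langle\beta\rangle\varphi$, Angel ODE existential, Demon ODE universal, $\langle\alpha^*\rangle$ least and $\langle\alpha^\times\rangle$ greatest fixed point). $\models$ denotes validity. Labels: every node of the syntax tree carries a unique label; $\alpha_a$ has root label $a$; $\mathrm{nodes}(\alpha_a)$ is its set of subgame labels; $\mathsf{end}$ is a special extra label. A map $S$ assigns formulas to a label set containing $\mathrm{nodes}(\alpha_a)\cup\{\mathsf{end}\}$; $S\{\mathsf{end}\mapsto Q\}$ replaces the value at $\mathsf{end}$. $\gamma_g,\delta_d$ denote immediate subgames with root labels $g,d$. Existential projection $\mathcal{P}(\alpha_a,S)$: $(x:=* )_a\mapsto(x:=* )_a;?S(\mathsf{end})$; $\{x'=f(x)\&Q\}_a\mapsto\{x'=f(x)\&Q\}_a;?S(\mathsf{end})$; $(\gamma_g\cup\delta_d)_a\mapsto(?S(g);\mathcal{P}(\gamma_g,S))\cup(?S(d);\mathcal{P}(\delta_d,S))$; $((\gamma_g)^* )_a\mapsto(?S(g);\mathcal{P}(\gamma_g,S\{\mathsf{end}\mapsto S(a)\}))^*;?S(\mathsf{end})$; $(\gamma_g;\delta_d)_a\mapsto\mathcal{P}(\gamma_g,S\{\mathsf{end}\mapsto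 S(d)\});\mathcal{P}(\delta_d,S)$; $(\gamma_g\cap\delta_d)_a\mapsto\mathcal{P}(\gamma_g,S)\cap\mathcal{P}(\delta_d,S)$; $((\gamma_g)^\times)_a\mapsto\mathcal{P}(\gamma_g,S\{\mathsf{end}\mapsto S(a)\})^\times$; $x:=e,x:=\otimes,?Q,!Q,\{x'=f(x)\&Q\}^d$ unchanged (labels preserved, new nodes fresh labels). Inductive Angelic subvalue map ($S\Vdash\alpha_a$), recursively: atomic $\alpha$ ($x:=e,x:=*,x:=\otimes,?Q,!Q$, Angel or Demon ODE): $\models S(a)\rightarrow\langle\alpha\rangle S(\mathsf{end})$; $(\gamma_g\cup\delta_d)_a$: $\models S(a)\rightarrow S(g)\vee S(d)$, $S\Vdash\gamma_g$, $S\Vdash\delta_d$; $(\gamma_g\cap\delta_d)_a$: $\models S(a)\rightarrow S(g)\wedge S(d)$ and both; $(\gamma_g;\delta_d)_a$: $\models S(a)\rightarrow S(g)$, $S\{\mathsf{end}\mapsto S(d)\}\Vdash\gamma_g$, $S\Vdash\delta_d$; $((\gamma_g)^* )_a$: $\models S(a)\rightarrow\langle\mathcal{P}(\alpha_a,S)\rangle S(\mathsf{end})$ and $S\{\mathsf{end}\mapsto S(a)\}\Vdash\gamma_g$; $((\gamma_g)^\times)_a$: $\models S(a)\rightarrow S(g)\wedge S(\mathsf{end})$ and $S\{\mathsf{end}\mapsto S(a)\}\Vdash\gamma_g$. *)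

From Stdlib Require Import Reals List Arith.
Import ListNotations.
Open Scope R_scope.

Definition var := nat.
Definition state := var -> R.

Inductive trm : Type :=
  | TVar (x : var)
  | TConst (c : R)
  | TNeg (e : trm)
  | TPlus (e1 e2 : trm)
  | TTimes (e1 e2 : trm).

Fixpoint eval (e : trm) (s : state) : R :=
  match e with
  | TVar x => s x
  | TConst c => c
  | TNeg e => - eval e s
  | TPlus e1 e2 => eval e1 s + eval e2 s
  | TTimes e1 e2 => eval e1 s * eval e2 s
  end.

(** An ODE system x' = f(x): a list of pairs (x_i, f_i(x)). *)
Definition ode := list (var * trm).

Inductive fml : Type :=
  | FTrue
  | FFalse
  | FEq (e1 e2 : trm)
  | FLe (e1 e2 : trm)
  | FLt (e1 e2 : trm)
  | FNot (f : fml)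
  | FAnd (f g : fml)
  | FOr (f g : fml)
  | FImp (f g : fml)
  | FExists (x : var) (f : fml)
  | FForall (x : var) (f : fml)
  | FDia (a : game) (f : fml)
with game : Type :=
  | GAsgn (l : nat) (x : var) (e : trm)
  | GRand (l : nat) (x : var)
  | GDRand (l : nat) (x : var)
  | GTest (l : nat) (Q : fml)
  | GDTest (l : nat) (Q : fml)
  | GODE (l : nat) (o : ode) (Q : fml)
  | GDODE (l : nat) (o : ode) (Q : fml)
  | GChoice (l : nat) (a b : game)
  | GDChoice (l : nat) (a b : game)
  | GSeq (l : nat) (a b : game)
  | GStar (l : nat) (a : game)
  | GDStar (l : nat) (a : game).

Definition FBox (a : game) (f : fml) : fml := FNot (FDia a (FNot f)).

Definition lab (a : game) : nat :=
  match a with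
  | GAsgn l _ _ | GRand l _ | GDRand l _ | GTest l _ | GDTest l _
  | GODE l _ _ | GDODE l _ _ | GChoice l _ _ | GDChoice l _ _
  | GSeq l _ _ | GStar l _ | GDStar l _ => l
  end.

Fixpoint nodes (a : game) : list nat :=
  match a with
  | GChoice l g d | GDChoice l g d | GSeq l g d => l :: nodes g ++ nodes d
  | GStar l g | GDStar l g => l :: nodes g
  | _ => [lab a]
  end.

Definition upd (s : state) (x : var) (r : R) : state :=
  fun y => if Nat.eqb y x then r else s y.

Definition deriv_within (r : R) (g : R -> R) (t : R) (d : R) : Prop :=
  forall eps, 0 < eps -> exists delta, 0 < delta /\
    forall h, h <> 0 -> Rabs h < delta -> 0 <= t + h <= r ->
      Rabs ((g (t + h) - g t) / h - d) < eps.

Definition odesol (o : ode) (P : state -> Prop) (s : state) (r : R)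
  (phi : R -> state) : Prop :=
  (forall y, phi 0 y = s y) /\
  (forall t, 0 <= t <= r -> forall y, ~ In y (map fst o) -> phi t y = s y) /\
  (forall t, 0 <= t <= r -> forall x e, In (x, e) o ->
      deriv_within r (fun u => phi u x) t (eval e (phi t))) /\
  (forall t, 0 <= t <= r -> P (phi t)).

Fixpoint fsem (f : fml) (s : state) {struct f} : Prop :=
  match f with
  | FTrue => True
  | FFalse => False
  | FEq e1 e2 => eval e1 s = eval e2 s
  | FLe e1 e2 => eval e1 s <= eval e2 s
  | FLt e1 e2 => eval e1 s < eval e2 s
  | FNot g => ~ fsem g s
  | FAnd g h => fsem g s /\ fsem h s
  | FOr g h => fsem g s \/ fsem h s
  | FImp g h => fsem g s -> fsem h s
  | FExists x g => exists r, fsem g (upd s x r)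
  | FForall x g => forall r, fsem g (upd s x r)
  | FDia a g => gsem a (fsem g) s
  end
with gsem (a : game) (X : state -> Prop) (s : state) {struct a} : Prop :=
  match a with
  | GAsgn _ x e => X (upd s x (eval e s))
  | GRand _ x => exists r, X (upd s x r)
  | GDRand _ x => forall r, X (upd s x r)
  | GTest _ Q => fsem Q s /\ X s
  | GDTest _ Q => fsem Q s -> X s
  | GODE _ o Q =>
      exists r phi, 0 <= r /\ odesol o (fsem Q) s r phi /\ X (phi r)
  | GDODE _ o Q =>
      forall r phi, 0 <= r -> odesol o (fsem Q) s r phi -> X (phi r)
  | GChoice _ g d => gsem g X s \/ gsem d X s
  | GDChoice _ g d => gsem g X s /\ gsem d X s
  | GSeq _ g d => gsem g (gsem d X) s
  | GStar _ g =>   (* least fixed point of Z |-> X u [[g]](Z) *)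
      forall Z : state -> Prop,
        (forall t, X t \/ gsem g Z t -> Z t) -> Z s
  | GDStar _ g =>  (* greatest fixed point of Z |-> X n [[g]](Z) *)
      exists Z : state -> Prop,
        Z s /\ (forall t, Z t -> X t /\ gsem g Z t)
  end.

Definition valid (f : fml) : Prop := forall s, fsem f s.

Inductive slot : Type := Node (n : nat) | End.

Definition lmap := slot -> fml.

Definition set_end (S : lmap) (Q : fml) : lmap :=
  fun k => match k with End => Q | Node n => S (Node n) end.

Local Open Scope nat_scope.

(** ** Existential projection.
    [proj a S n] returns the projected game together with the next
    unused label; new nodes get the fresh labels n, n+1, ... *)
Fixpoint proj (a : game) (S : lmap) (n : nat) : game * nat :=
  match a with
  | GRand l x => (GSeq n (GRand l x) (GTest (n + 1) (S End)), n + 2)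
  | GODE l o Q => (GSeq n (GODE l o Q) (GTest (n + 1) (S End)), n + 2)
  | GChoice l g d =>
      let '(pg, n1) := proj g S (n + 4) in
      let '(pd, n2) := proj d S n1 in
      (GChoice l (GSeq n (GTest (n + 1) (S (Node (lab g)))) pg)
                 (GSeq (n + 2) (GTest (n + 3) (S (Node (lab d)))) pd), n2)
  | GStar l g =>
      let '(pg, n1) := proj g (set_end S (S (Node l))) (n + 4) in
      (GSeq n (GStar l (GSeq (n + 1) (GTest (n + 2) (S (Node (lab g)))) pg))
              (GTest (n + 3) (S End)), n1)
  | GSeq l g d =>
      let '(pg, n1) := proj g (set_end S (S (Node (lab d)))) n in
      let '(pd, n2) := proj d S n1 in
      (GSeq l pg pd, n2)
  | GDChoice l g d =>
      let '(pg, n1) := proj g S n in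
      let '(pd, n2) := proj d S n1 in
      (GDChoice l pg pd, n2)
  | GDStar l g =>
      let '(pg, n1) := proj g (set_end S (S (Node l))) n in
      (GDStar l pg, n1)
  | _ => (a, n)
  end.

Definition project (a : game) (S : lmap) : game :=
  fst (proj a S (Nat.succ (fold_right Nat.max 0%nat (nodes a)))).

Fixpoint subval (S : lmap) (a : game) : Prop :=
  match a with
  | GChoice l g d =>
      valid (FImp (S (Node l)) (FOr (S (Node (lab g))) (S (Node (lab d))))) /\
      subval S g /\ subval S d
  | GDChoice l g d =>
      valid (FImp (S (Node l)) (FAnd (S (Node (lab g))) (S (Node (lab d))))) /\
      subval S g /\ subval S d
  | GSeq l g d =>
      valid (FImp (S (Node l)) (S (Node (lab g)))) /\
      subval (set_end S (S (Node (lab d)))) g /\ subval S d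
  | GStar l g =>
      valid (FImp (S (Node l)) (FDia (project a S) (S End))) /\
      subval (set_end S (S (Node l))) g
  | GDStar l g =>
      valid (FImp (S (Node l)) (FAnd (S (Node (lab g))) (S End))) /\
      subval (set_end S (S (Node l))) g
  | _ => valid (FImp (S (Node (lab a))) (FDia a (S End)))
  end.

(** By induction on a, generalised to every goal region X containing S(end):
    S(a) is a winning region for P(a, S) towards X.  At an Angelic choice
    Angel takes a branch whose label value holds, the tests ?S(end) inserted
    after her moves are passed by the subvalue condition, and a sequential
    composition is handled with S(d) as the intermediate goal.  For a Demonic
    loop S(a) itself is the invariant witnessing the greatest fixed point.  An
    Angelic loop is the one case where no invariant suffices, which is why the
    subvalue condition there demands S(a) -> <P(a,S)>S(end) outright; it
    transfers to the nested projection because the winning regions of P(a, S)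
    do not depend on the fresh labels it allocates. *)

From Stdlib Require Import Reals List.

Lemma gsem_monotone (a : game) (X Y : state -> Prop) :
  (forall t, X t -> Y t) -> forall s, gsem a X s -> gsem a Y s.
Proof. revert X Y; induction a; simpl; firstorder. Qed.

Local Open Scope nat_scope.

Lemma gsem_proj_fresh_irrelevant (a : game) (S : lmap) (n m : nat)
    (X : state -> Prop) (s : state) :
  gsem (fst (proj a S n)) X s -> gsem (fst (proj a S m)) X s.
Proof.
  revert S n m X s; induction a as [| | | | | | |l g IHg d IHd|l g IHg d IHd
    |l g IHg d IHd|l g IHg|l g IHg]; intros S n m X s H; try exact H; simpl in *.
  - pose proof (IHg S (n + 4) (m + 4)) as IHg'.
    destruct (proj g S (n + 4)) as [pg n1], (proj g S (m + 4)) as [pg' m1].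
    pose proof (IHd S n1 m1) as IHd'.
    destruct (proj d S n1) as [pd n2], (proj d S m1) as [pd' m2]; simpl in *.
    destruct H as [[HSg Hg] | [HSd Hd]]; [left | right]; auto.
  - pose proof (IHg S n m) as IHg'.
    destruct (proj g S n) as [pg n1], (proj g S m) as [pg' m1].
    pose proof (IHd S n1 m1) as IHd'.
    destruct (proj d S n1) as [pd n2], (proj d S m1) as [pd' m2]; simpl in *.
    destruct H; auto.
  - set (Sg := set_end S (S (Node (lab d)))) in *.
    pose proof (IHg Sg n m) as IHg'.
    destruct (proj g Sg n) as [pg n1], (proj g Sg m) as [pg' m1].
    pose proof (IHd S n1 m1) as IHd'.
    destruct (proj d S n1) as [pd n2], (proj d S m1) as [pd' m2]; simpl in *.
    eapply IHg', gsem_monotone; [| exact H]; auto.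
  - set (Sg := set_end S (S (Node l))) in *.
    pose proof (IHg Sg (n + 4) (m + 4)) as IHg'.
    destruct (proj g Sg (n + 4)) as [pg n1], (proj g Sg (m + 4)) as [pg' m1];
      simpl in *.
    intros Z HZ; apply H; intros t [Ht | [HSg Ht]]; apply HZ; auto.
  - set (Sg := set_end S (S (Node l))) in *.
    pose proof (IHg Sg n m) as IHg'.
    destruct (proj g Sg n) as [pg n1], (proj g Sg m) as [pg' m1]; simpl in *.
    destruct H as [Z [HZs HZ]]; exists Z; split; [exact HZs |].
    intros t Ht; destruct (HZ t Ht); auto.
Qed.

Lemma gsem_proj_of_subval (a : game) (S : lmap) (X : state -> Prop) :
  subval S a -> (forall t, fsem (S End) t -> X t) ->
  forall n s, fsem (S (Node (lab a))) s -> gsem (fst (proj a S n)) X s.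
Proof.
  revert S X; induction a as [| | | | | | |l g IHg d IHd|l g IHg d IHd
    |l g IHg d IHd|l g IHg|l g IHg]; intros S X Hsub HX n s Hs;
    try solve [apply (gsem_monotone _ _ _ HX); exact (Hsub s Hs)]; simpl in *.
  - destruct (Hsub s Hs) as [r Hr]; exists r; auto.
  - destruct (Hsub s Hs) as [r [sol [Hr [Hsol Hend]]]]; exists r, sol; auto.
  - destruct Hsub as [Hsplit [Hg Hd]].
    pose proof (IHg S X Hg HX (n + 4)) as IHg'.
    destruct (proj g S (n + 4)) as [pg n1].
    pose proof (IHd S X Hd HX n1) as IHd'.
    destruct (proj d S n1) as [pd n2]; simpl in *.
    destruct (Hsplit s Hs); [left | right]; auto.
  - destruct Hsub as [Hsplit [Hg Hd]].
    pose proof (IHg S X Hg HX n) as IHg'.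
    destruct (proj g S n) as [pg n1].
    pose proof (IHd S X Hd HX n1) as IHd'.
    destruct (proj d S n1) as [pd n2]; simpl in *.
    destruct (Hsplit s Hs); auto.
  - destruct Hsub as [Hfirst [Hg Hd]].
    pose proof (fun Y HY => IHg _ Y Hg HY n) as IHg'.
    destruct (proj g _ n) as [pg n1].
    pose proof (IHd S X Hd HX n1) as IHd'.
    destruct (proj d S n1) as [pd n2]; simpl in *.
    apply IHg'; [exact IHd' | exact (Hfirst s Hs)].
  - destruct Hsub as [Hloop _].
    change (gsem (fst (proj (GStar l g) S n)) X s).
    eapply gsem_proj_fresh_irrelevant.
    exact (gsem_monotone _ _ _ HX s (Hloop s Hs)).
  - destruct Hsub as [Hloop Hg].
    pose proof (IHg _ (fsem (S (Node l))) Hg (fun t Ht => Ht) n) as IHg'.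
    destruct (proj g _ n) as [pg n1]; simpl in *.
    exists (fsem (S (Node l))); split; [exact Hs |].
    intros t Ht; destruct (Hloop t Ht) as [HSg HSend]; auto.
Qed.

Theorem mainTheorem9 (a : game) (S : lmap) (phi : fml) :
  NoDup (nodes a) ->
  subval S a ->
  valid (FImp (S End) phi) ->
  forall s : state, fsem (S (Node (lab a))) s ->
    fsem (FDia (project a S) phi) s.
Proof.
  (* Labels are only ever read through S. *)
  intros _ Hsub Hphi s Hs.
  exact (gsem_proj_of_subval a S (fsem phi) Hsub Hphi _ s Hs).
Qed.
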